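(* Let $G$ be a finite group, $H,K\le G$, and $p,q$ primes. Then for the ideals $\mathcal{P}_{L,r}$ of $\mathrm{Gh}(\underline{A}_G)$: (i) $\mathcal{P}_{K,0}\subseteq\mathcal{P}_{H,0}$ if and only if $H\preccurlyeq_GK$; (ii) $\mathcal{P}_{H,0}\subseteq\mathcal{P}_{H,p}$ and $\mathcal{P}_{H,p}\not\subseteq\mathcal{P}_{K,0}$; (iii) $\mathcal{P}_{K,p}\subseteq\mathcal{P}_{H,q}$ if and only if $p=q$ and $H\preccurlyeq_GK$.
   Context: For $H\le G$, $\widetilde{A}(H)$ is the subring of $\prod_{I\le H}\mathbb{Z}$ of tuples $(a_I)_{I\le H}$ with $a_{hIh^{-1}}=a_I$ for $h\in H$; $\mathrm{Gh}(\underline{A}_G)$ is the $G$-Tambara functor with $\mathrm{Gh}(\underline{A}_G)(G/H)=\widetilde{A}(H)$ (restriction is projection onto components, transfer $\mathrm{tr}^K_H(a)_I=\sum_{kH\in K/H,\ I^k\le H}a_{I^k}$, norm $\mathrm{nm}^K_H(a)_I=\prod_{IgH\in I\backslash K/H}a_{I^g\cap H}$, conjugation $c_{g,H}(a)_J=a_{g^{-1}Jg}$). $I\preccurlyeq_G L$ means $I$ is conjugate in $G$ to a subgroup of $L$. For $L\le G$ and $r$ a prime or $0$, $\mathcal{P}_{L,r}$ is the ideal with $\mathcal{P}_{L,r}(G/M)=\widetilde{A}(M)\cap\prod_{I\le M}\delta_{L,r}(I)\mathbb{Z}$, where $\delta_{L,r}(I)=r$ if $I\preccurlyeq_GL$ and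 $1$ otherwise. *)

From mathcomp Require Import all_boot all_order all_algebra all_fingroup.
Set Implicit Arguments. Unset Strict Implicit. Unset Printing Implicit Defensive.
Import GRing.Theory Num.Theory.
Local Open Scope group_scope.

Section GhostIdeals.
Variable gT : finGroupType.

Definition subconj (G I L : {set gT}) : bool := [exists g in G, I :^ g \subset L].

Definition delta (G L : {set gT}) (r : nat) (I : {set gT}) : nat :=
  if subconj G I L then r else 1%N.

(* Elements of Ã(M): tuples a_I (I ≤ M), stored as functions on all subgroups
   of gT whose values outside {I | I ≤ M} are irrelevant; invariant under
   M-conjugation. *)
Definition Atilde (M : {group gT}) (a : {group gT} -> int) : Prop :=
  forall I : {group gT}, I \subset M ->
    forall h, h \in M -> a (I :^ h)%G = a I.

Definition inP (G L : {set gT}) (r : nat) (M : {group gT}) (a : {group gT} -> int) : Prop :=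
  Atilde M a /\
  forall I : {group gT}, I \subset M -> ((delta G L r I)%:Z %| a I)%Z.

(* P_{L1,r1} ⊆ P_{L2,r2} as ideals of Gh(A_G): levelwise inclusion at every G/M *)
Definition ideal_sub (G L1 : {set gT}) (r1 : nat) (L2 : {set gT}) (r2 : nat) : Prop :=
  forall M : {group gT}, M \subset G ->
    forall a : {group gT} -> int, inP G L1 r1 M a -> inP G L2 r2 M a.

End GhostIdeals.

From mathcomp Require Import all_boot all_order all_algebra all_fingroup.
Set Implicit Arguments. Unset Strict Implicit. Unset Printing Implicit Defensive.

(* The tuple I |-> δ_{K,r}(I) is itself an element of P_{K,r}(G/M) for every
   M ≤ G.  Feeding it, at level G/H, to an inclusion P_{K,r1} ⊆ P_{H,r2} and
   reading off the H-component gives r2 | δ_{K,r1}(H), which for r2 ≠ 1 forces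
   H ≼_G K and r2 | r1.  Conversely, these two conditions give the inclusion by
   transitivity of ≼_G.  All three parts are instances of this criterion. *)

Section GhostIdealInclusion.
Variables (gT : finGroupType) (G : {group gT}).
Local Open Scope group_scope.

Lemma subconjJ (I L : {set gT}) h :
  h \in G -> subconj G (I :^ h) L = subconj G I L.
Proof.
move=> Gh; apply/existsP/existsP => -[g /andP[Gg sIL]].
  by exists (h * g); rewrite groupM // conjsgM sIL.
by exists (h^-1 * g); rewrite groupM ?groupV // conjsgM conjsgK sIL.
Qed.

Lemma subconj_refl (L : {set gT}) : subconj G L L.
Proof. by apply/existsP; exists 1; rewrite group1 conjsg1 subxx. Qed.

Lemma subconj_trans (I H K : {set gT}) :
  subconj G I H -> subconj G H K -> subconj G I K.
Proof.
move=> /existsP[g /andP[Gg sIH]] /existsP[h /andP[Gh sHK]].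
apply/existsP; exists (g * h); rewrite groupM // conjsgM.
by apply: subset_trans sHK; rewrite conjSg.
Qed.

Lemma deltaJ (L I : {set gT}) r h :
  h \in G -> delta G L r (I :^ h) = delta G L r I.
Proof. by move=> Gh; rewrite /delta subconjJ. Qed.

Lemma delta_id (L : {set gT}) r : delta G L r L = r.
Proof. by rewrite /delta subconj_refl. Qed.

Lemma inP_delta (L : {set gT}) r (M : {group gT}) :
  M \subset G -> inP G L r M (fun I : {group gT} => Posz (delta G L r I)).
Proof.
move=> sMG; split=> [I _ h Mh | I _]; last exact: dvdzz.
by rewrite deltaJ // (subsetP sMG).
Qed.

Lemma ideal_sub_dvd_delta (K H : {group gT}) r1 r2 :
  H \subset G -> ideal_sub G K r1 H r2 -> (r2 %| delta G K r1 H)%N.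
Proof.
move=> sHG sub_KH; have [_ dvd_H] := sub_KH H sHG _ (inP_delta K r1 sHG).
by have := dvd_H H (subxx H); rewrite delta_id dvdzE.
Qed.

Lemma ideal_sub_subconj (K H : {set gT}) r1 r2 :
  (r2 %| r1)%N -> subconj G H K -> ideal_sub G K r1 H r2.
Proof.
move=> dvd_r sHK M _ a [Aa dvd_a]; split=> // I sIM; rewrite /delta.
have [sIH|_] := boolP (subconj G I H); last exact: dvd1z.
apply: dvdz_trans (dvd_a I sIM).
by rewrite /delta (subconj_trans sIH sHK) dvdzE.
Qed.

Lemma ideal_subP (K H : {group gT}) r1 r2 :
  H \subset G -> r2 != 1%N ->
  ideal_sub G K r1 H r2 <-> (r2 %| r1)%N /\ subconj G H K.
Proof.
move=> sHG r2_neq1; split=> [sub_KH | [dvd_r sHK]].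
  have := ideal_sub_dvd_delta sHG sub_KH; rewrite /delta.
  by case: (subconj G H K); rewrite // dvdn1 (negPf r2_neq1).
exact: ideal_sub_subconj.
Qed.

End GhostIdealInclusion.

Theorem proposition4p3 (gT : finGroupType) (G H K : {group gT}) (p q : nat) :
  H \subset G -> K \subset G -> prime p -> prime q ->
  (ideal_sub G K 0 H 0 <-> subconj G H K) /\
  (ideal_sub G H 0 H p /\ ~ ideal_sub G H p K 0) /\
  (ideal_sub G K p H q <-> p = q /\ subconj G H K).
Proof.
move=> sHG sKG pr_p pr_q.
have neq01 : 0 != 1 by [].
have q_neq1 : q != 1 by rewrite gtn_eqF ?prime_gt1.
split; [|split; [split|]].
- by apply: iff_trans (ideal_subP K 0 sHG neq01) _; split=> [[]|].
- exact/ideal_sub_subconj/subconj_refl.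
- by case/(ideal_subP H p sKG neq01); rewrite dvd0n gtn_eqF ?prime_gt0.
- apply: iff_trans (ideal_subP K p sHG q_neq1) _.
  by rewrite dvdn_prime2 // eq_sym; split=> -[/eqP].
Qed.
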